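(* For every prime power $q\equiv 1\pmod 4$, the signified graph $Tr(SP_q)$ is vertex-transitive, i.e. for any two vertices $x,y$ there is a sign-preserving automorphism of $Tr(SP_q)$ mapping $x$ to $y$.
   Context: A signified graph is a simple graph with each edge labelled positive or negative. Let $q\equiv 1\pmod 4$ be a prime power and $\mathbb{F}_q$ the field of order $q$; for $x\in\mathbb{F}_q^*$ let $\mathrm{sq}(x)=+1$ if $x$ is a square and $-1$ otherwise (note $-1$ is a square). The signified Paley graph $SP_q$ is the complete graph on vertex set $\mathbb{F}_q$ where the edge $xy$ is negative iff $\mathrm{sq}(y-x)=-1$. The Tromp signified Paley graph $Tr(SP_q)$ has vertex set $\{u_i : u\in\mathbb{F}_q\cup\{\infty\},\ i\in\{0,1\}\}$ ($2q+2$ vertices). For $u,v\in\mathbb{F}_q$ and $i,j\in\{0,1\}$ with $u\neq v$, $u_iv_j$ is an edge with sign $\mathrm{sq}(u-v)\cdot(-1)^{i+j}$; for $v\in\mathbb{F}_q$, $\infty_iv_j$ is an edge with sign $(-1)^{i+j}$; there are no other edges (in particular $u_0u_1$ is never an edge). Equivalently, $Tr(SP_q)$ is the anti-twinned graph of $SP_q$ with an added universal vertex $\infty$ joined positively to all vertices. An automorphism of a signified graph is a bijection of its vertex set mapping edges to edges of the same sign and non-edges to non-edges. *)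

From HB Require Import structures.
From mathcomp Require Import all_boot all_order all_algebra all_field.
Set Implicit Arguments. Unset Strict Implicit. Unset Printing Implicit Defensive.
Import GRing.Theory.
Local Open Scope ring_scope.

(* A signified graph on a vertex type V is given by a function
   V -> V -> option bool : None = non-edge, Some true = positive edge,
   Some false = negative edge. *)

Definition is_sq (F : finFieldType) (x : F) : bool := [exists y : F, y * y == x].

(* Vertices of Tr(SP_q): u_i with u in F ∪ {∞} (None = ∞), i in {0,1} (false = 0). *)
Definition tr_vertex (F : finFieldType) := (option F * bool)%type.

Definition tr_sign (F : finFieldType) (x y : tr_vertex F) : option bool :=
  match x.1, y.1 with
  | Some u, Some v =>
      if u == v then None
      else Some (is_sq (u - v) == (x.2 == y.2))   (* sq(u-v) * (-1)^(i+j) = +1 *)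
  | Some _, None | None, Some _ => Some (x.2 == y.2) (* (-1)^(i+j) = +1 *)
  | None, None => None
  end.

Definition signified_aut (V : Type) (s : V -> V -> option bool) (f : V -> V) : Prop :=
  bijective f /\ forall x y, s (f x) (f y) = s x y.

From HB Require Import structures.
From mathcomp Require Import all_boot all_order all_algebra all_field cyclic.
From mathcomp Require Import ring.
Set Implicit Arguments. Unset Strict Implicit. Unset Printing Implicit Defensive.
Import GRing.Theory.
Local Open Scope ring_scope.

(* Since automorphisms form a group, it suffices to move the base vertex 0_0
   to every vertex.  Two families of automorphisms do this:
   - the shifts  u_i |-> (u + a)_(i + b)  (fixing infinity), which only use
     that sq(u - v) is translation invariant, and reach every u_i, u in F_q;
   - the inversion  u_i |-> (1/u)_(i + [u not a square]),  0_i <-> infinity_i,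
     which exchanges 0_0 and infinity_0.
   The inversion preserves signs because of the identity
   1/u - 1/v = -(u - v)/(uv) together with the multiplicativity of the
   quadratic character and the fact that -1 is a square when q = 1 (mod 4). *)

Section FiniteFieldUnits.
Variable F : finFieldType.

Lemma unit_expf_card_pred (x : F) : x != 0 -> x ^+ #|F|.-1 = 1.
Proof.
move=> x0; apply: (mulIf x0); rewrite mul1r -exprSr.
by rewrite (ltn_predK (finNzRing_gt1 F)) expf_card.
Qed.

Lemma finField_prim_root : exists g : F, #|F|.-1.-primitive_root g.
Proof.
have n_gt0 : (0 < #|F|.-1)%N by rewrite -ltnS (ltn_predK (finNzRing_gt1 F)) finNzRing_gt1.
set units := [seq x <- enum F | x != 0].
have units_roots : all #|F|.-1.-unity_root units.
  by apply/allP => x; rewrite mem_filter unity_rootE => /andP[x0 _]; rewrite unit_expf_card_pred.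
have units_uniq : uniq units by rewrite filter_uniq // enum_uniq.
have size_units : (#|F|.-1 <= size units)%N.
  rewrite size_filter -(cardC1 (0 : F)) cardE /enum_mem size_filter count_filter.
  by apply: eq_leq; apply: eq_count => x; rewrite !inE andbT.
have /hasP[g _ g_prim] := has_prim_root n_gt0 units_roots units_uniq size_units.
by exists g.
Qed.

Lemma is_sqV (x : F) : is_sq x^-1 = is_sq x.
Proof.
suff sqV (y : F) : is_sq y -> is_sq y^-1 by apply/idP/idP => /sqV; rewrite ?invrK.
by rewrite /is_sq => /existsP[z /eqP <-]; apply/existsP; exists z^-1; rewrite invfM.
Qed.
End FiniteFieldUnits.

Section EulerCriterion.
Variable F : finFieldType.
Hypothesis oddF : odd #|F|.

Let m := (#|F|./2)%N.

Lemma half_double : #|F|.-1 = m.*2.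
Proof. by rewrite odd_halfK. Qed.

Lemma half_gt0 : (0 < m)%N.
Proof.
have := finNzRing_gt1 F; rewrite /m -(odd_double_half #|F|) oddF.
by case: (#|F|./2).
Qed.

(* x^((q-1)/2) squares to 1, hence is +1 or -1. *)
Lemma half_pow_sign (x : F) : x != 0 -> x ^+ m = 1 \/ x ^+ m = -1.
Proof.
move=> x0; have : (x ^+ m) ^+ 2 == 1.
  by rewrite -exprM muln2 -half_double unit_expf_card_pred.
by rewrite sqrf_eq1 => /orP[] /eqP; [left | right].
Qed.

(* A generator g satisfies g^((q-1)/2) = -1 != 1, so F has characteristic != 2. *)
Lemma opp1_neq1 : (-1 : F) != 1.
Proof.
have [g g_prim] := finField_prim_root F.
have g0 : g != 0.
  apply: contra_eq_neq (prim_expr_order g_prim) => ->.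
  by rewrite expr0n half_double double_eq0 eqn0Ngt half_gt0 eq_sym oner_eq0.
have : g ^+ m != 1.
  rewrite -(prim_order_dvd g_prim) half_double -muln2.
  apply/negP => /dvdn_leq; rewrite half_gt0 => /(_ isT).
  by rewrite -{2}[m]muln1 leq_pmul2l ?half_gt0.
by case: (half_pow_sign g0) => ->; rewrite ?eqxx // eq_sym.
Qed.

Lemma euler_criterion (x : F) : x != 0 -> is_sq x = (x ^+ m == 1).
Proof.
move=> x0; apply/idP/idP.
- case/existsP => y /eqP yx; have y0 : y != 0 by apply: contraNneq x0 => y0; rewrite -yx y0 mul0r.
  by rewrite -yx -expr2 -exprM mul2n -half_double unit_expf_card_pred.
- move/eqP => xm; have [g g_prim] := finField_prim_root F.
  have [[i _] /= xi] := prim_rootP g_prim (unit_expf_card_pred x0).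
  have : (m.*2 %| i * m)%N by rewrite -half_double (prim_order_dvd g_prim) exprM -xi xm.
  rewrite -mul2n dvdn_pmul2r ?half_gt0 // => /dvdnP[j ij].
  by apply/existsP; exists (g ^+ j); rewrite xi ij -exprD addnn -mul2n mulnC.
Qed.

Lemma is_sqM (x y : F) : x != 0 -> y != 0 -> is_sq (x * y) = (is_sq x == is_sq y).
Proof.
move=> x0 y0; rewrite !euler_criterion ?mulf_neq0 // exprMn.
have n1 := opp1_neq1; have n1' : (1 : F) != -1 by rewrite eq_sym.
by case: (half_pow_sign x0) => ->; case: (half_pow_sign y0) => ->;
  rewrite ?mul1r ?mulr1 ?mulrNN ?mulr1 ?eqxx ?(negbTE n1) ?(negbTE n1').
Qed.
End EulerCriterion.

Section QuarterOrder.
Variable F : finFieldType.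
Hypothesis hq : (#|F| %% 4 = 1)%N.

Lemma odd_card_of_mod4 : odd #|F|.
Proof. by rewrite (divn_eq #|F| 4) hq oddD oddM andbF. Qed.

(* Euler's criterion with (q - 1)/2 even. *)
Lemma is_sq_opp1 : is_sq (-1 : F).
Proof.
have half_even : (#|F|./2 = (#|F| %/ 4) * 2)%N.
  set k := (#|F| %/ 4)%N.
  by rewrite {1}(divn_eq #|F| 4) hq addn1 -/k -[4%N]/(2 * 2)%N mulnA muln2 /= uphalf_double.
rewrite euler_criterion ?oppr_eq0 ?oner_eq0 ?odd_card_of_mod4 //.
by rewrite half_even mulnC exprM sqrrN expr1n expr1n.
Qed.

(* Negation preserves squares, since -x = (-1) x. *)
Lemma is_sqN (x : F) : is_sq (- x) = is_sq x.
Proof.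
have [-> | x0] := eqVneq x 0; first by rewrite oppr0.
rewrite -mulN1r is_sqM ?oppr_eq0 ?oner_eq0 ?odd_card_of_mod4 //.
by rewrite is_sq_opp1.
Qed.

(* From 1/u - 1/v = -(u - v)/(uv): 1/u - 1/v and u - v have the same
   quadratic character iff u and v do. *)
Lemma is_sq_subV (u v : F) : u != 0 -> v != 0 -> u != v ->
  is_sq (u^-1 - v^-1) = (is_sq (u - v) == (is_sq u == is_sq v)).
Proof.
move=> u0 v0 uv; have oddF := odd_card_of_mod4.
have -> : u^-1 - v^-1 = (u - v) * - (u^-1 * v^-1) by field; rewrite u0 v0.
rewrite is_sqM ?subr_eq0 ?oppr_eq0 ?mulf_neq0 ?invr_eq0 //.
by rewrite is_sqN is_sqM ?invr_eq0 // !is_sqV.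
Qed.
End QuarterOrder.

Lemma aut_comp (V : Type) (s : V -> V -> option bool) (f g : V -> V) :
  signified_aut s f -> signified_aut s g -> signified_aut s (f \o g).
Proof.
move=> [f_bij f_sign] [g_bij g_sign]; split; first exact: bij_comp.
by move=> x y /=; rewrite f_sign g_sign.
Qed.

Lemma aut_inv (V : Type) (s : V -> V -> option bool) (f : V -> V) :
  signified_aut s f -> exists g, signified_aut s g /\ cancel f g.
Proof.
move=> [[g fK gK] f_sign]; exists g; split => //; split; first by exists f.
by move=> x y; rewrite -f_sign !gK.
Qed.

(* Vertex-transitivity follows from moving one base vertex everywhere:
   to send x to y, go back from x to the base vertex, then on to y. *)
Lemma transitive_from_base (V : Type) (s : V -> V -> option bool) (x0 : V) :
  (forall y, exists f, signified_aut s f /\ f x0 = y) ->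
  forall x y, exists f, signified_aut s f /\ f x = y.
Proof.
move=> reach x y.
have [f [f_aut fx]] := reach x; have [g [g_aut gy]] := reach y.
have [f' [f'_aut fK]] := aut_inv f_aut.
by exists (g \o f'); split; [exact: aut_comp | rewrite /= -fx fK].
Qed.

Section TrompAutomorphisms.
Variable F : finFieldType.

Definition shift (a : F) (b : bool) (x : tr_vertex F) : tr_vertex F :=
  (omap (fun u => u + a) x.1, x.2 (+) b).

(* Shifts are automorphisms: u - v and i + j (mod 2) are translation invariant. *)
Lemma shift_aut (a : F) (b : bool) : signified_aut (@tr_sign F) (shift a b).
Proof.
split; first by exists (shift (- a) b) => -[[u|] i]; rewrite /shift /= addbK ?addrK ?subrK.
move=> [[u|] i] [[v|] j]; rewrite /tr_sign /shift /=; try by case: i; case: j; case: b.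
rewrite (inj_eq (addIr a)) opprD addrACA subrr addr0.
by case: eqP => // _; case: i; case: j; case: b.
Qed.

Definition invert (x : tr_vertex F) : tr_vertex F :=
  match x.1 with
  | None => (Some 0, x.2)
  | Some u => if u == 0 then (None, x.2) else (Some u^-1, x.2 (+) ~~ is_sq u)
  end.

Lemma invertK : involutive invert.
Proof.
move=> [[u|] i]; rewrite /invert /=; last by rewrite eqxx.
have [-> // | u0] := eqVneq u 0.
by rewrite /= invr_eq0 (negbTE u0) invrK is_sqV -addbA addbb addbF.
Qed.

Hypothesis hq : (#|F| %% 4 = 1)%N.

(* The inversion is an automorphism; the case of two finite nonzero points
   is the identity is_sq_subV, the cases involving 0 or infinity use that
   the quadratic character is even. *)
Lemma invert_aut : signified_aut (@tr_sign F) invert.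
Proof.
split; first by exists invert; apply: invertK.
move=> [[u|] i] [[v|] j]; rewrite /invert /tr_sign /=; last by rewrite eqxx.
- have [u0 | u0] := eqVneq u 0; have [v0 | v0] := eqVneq v 0; try subst; rewrite /= ?eqxx //.
  + by rewrite [0 == v]eq_sym (negbTE v0) sub0r is_sqN //; case: i; case: j; case: (is_sq v).
  + by rewrite (negbTE u0) subr0; case: i; case: j; case: (is_sq u).
  rewrite (inj_eq (@invr_inj F)); have [// | uv] := eqVneq u v.
  rewrite is_sq_subV //.
  by case: i; case: j; case: (is_sq u); case: (is_sq v); case: (is_sq (u - v)).
- have [// | u0] := eqVneq u 0.
  by rewrite /= invr_eq0 (negbTE u0) subr0 is_sqV; case: i; case: j; case: (is_sq u).
- have [// | v0] := eqVneq v 0.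
  by rewrite /= eq_sym invr_eq0 (negbTE v0) sub0r is_sqN // is_sqV; case: i; case: j; case: (is_sq v).
Qed.

(* Every vertex is the image of 0_0 under an automorphism: a shift for the
   finite vertices, a layer swap after the inversion for infinity_b. *)
Lemma reach_from_origin (x : tr_vertex F) :
  exists f, signified_aut (@tr_sign F) f /\ f (Some 0, false) = x.
Proof.
case: x => [[a|] b].
  by exists (shift a b); split; [exact: shift_aut | rewrite /shift /= add0r].
exists (shift 0 b \o invert); split; last by rewrite /= /invert /shift /= eqxx.
by apply: aut_comp; [exact: shift_aut | exact: invert_aut].
Qed.
End TrompAutomorphisms.

Theorem mainTheorem5 (F : finFieldType) (hq : (#|F| %% 4 = 1)%N) :
  forall x y : tr_vertex F,
    exists f : tr_vertex F -> tr_vertex F,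
      signified_aut (@tr_sign F) f /\ f x = y.
Proof. exact: transitive_from_base (reach_from_origin hq). Qed.
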